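(* Let $D$ be a checkerboard colorable virtual link diagram and let $G_D$ be a signed Tait graph of $D$. Then $\langle D\rangle(A,B,d)=F[G_D](A,B,d)$.
   Context: A virtual link diagram is a plane curve with real crossings and virtual crossings. It is checkerboard colorable if one can color a small neighbourhood of one side of each arc so that near each real crossing the colored sides alternate, and near each virtual crossing the colorings of the two strands pass through independently. Bracket polynomial: $\langle D\rangle(A,B,d)=\sum_{\sigma}A^{\alpha(\sigma)}B^{\beta(\sigma)}d^{|\sigma|-1}$, the sum over all states $\sigma$ (choice of $A$- or $B$-smoothing at every real crossing), $\alpha(\sigma),\beta(\sigma)$ the numbers of $A$- and $B$-smoothings, $|\sigma|$ the number of closed curves. Signed Tait graph (Chmutov–Pak): given a checkerboard coloring of $D$, thicken $D$ to a surface in which bands at virtual crossings pass without touching; the colored neighbourhoods form annuli whose exterior circles run along the diagram, jumping between strands at real crossings so that the two colored corners of each crossing lie on them. Replace each real crossing by an edge-ribbon joining the exterior-circle arcs at the two colored corners and glue discs along the interior circles. The result is an orientable signed ribbon graph (vertices = capped annuli, edges = real crossings, edge sign $+$ iff the $A$-smoothing of the crossing joins the two colored corners), i.e. a signed cyclic graph $G_D$ (cyclic graph: graph with cyclic ordering of half-edges at each vertex). The polynomial $F[G]$ of a signed cyclic graph $G$: edges may be ''marked''; for an unmarked edge $e$, $G-e$ deletes $e$ and $G(\bar e)$ keeps $e$ and marks it; $F[G]=B\,F[G-e]+A\,F[G(\bar e)]$ if $e$ is positive, $F[G]=A\,F[G-e]+B\,F[G(\bar e)]$ if $e$ is negative;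 and if $H$ is a spanning subgraph (all vertices, a subset of edges with induced cyclic order) all of whose edges are marked, $F[H]=d^{bc(H)-1}$, with $bc(H)$ the number of boundary components of the ribbon graph of $H$. *)

From mathcomp Require Import all_boot all_order all_algebra.
Unset Printing Implicit Defensive.
Import GRing.Theory.
Local Open Scope ring_scope.

(* Virtual crossings are invisible to all notions involved (states, curves,  *)
(* colourings, the thickened surface); a virtual diagram is encoded by its   *)
(* real crossings, the cyclic (counterclockwise) order 0,1,2,3 of the four   *)
(* half-edges at each real crossing, the arcs joining half-edges (through    *)
(* virtual crossings), the over/under information, and the number of         *)
(* crossingless closed components.                                           *)
(* Corner j at crossing c is the region between half-edges j and j+1.       *)
Record vdiagram := VDiagram {
  vd_X : finType;
  vd_arc : vd_X * 'I_4 -> vd_X * 'I_4;          (* other end of the arc *)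
  vd_over : vd_X -> bool;  (* true: the strand through half-edges 0,2 is over *)
  vd_loops : nat           (* closed components without real crossings *)
}.
Arguments vd_arc : clear implicits.
Arguments vd_over : clear implicits.

Definition vdiagram_wf (D : vdiagram) : Prop :=
  (forall h, vd_arc D (vd_arc D h) = h) /\ (forall h, vd_arc D h <> h).

(* Kauffman's convention: corner j of c is an A-region (swept when the
   overstrand is rotated counterclockwise); these are corners 0,2 when the
   strand 0-2 is over, and corners 1,3 otherwise. *)
Definition corner_is_A (D : vdiagram) (c : vd_X D) (j : 'I_4) : bool :=
  odd j != vd_over D c.

(* smoothing at crossing c; s = true: A-smoothing (joins the two A-corners),
   s = false: B-smoothing.  The smoothing joining corners k, k+2 replaces the
   crossing by the two arcs hugging corners k+1 and k+3; a hugged corner j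
   connects half-edges j and j+1.  [smooth_partner] gives the half-edge to
   which h is connected by the smoothing. *)
Definition hugged (D : vdiagram) (s : bool) (c : vd_X D) (j : 'I_4) : bool :=
  corner_is_A D c j != s.

Definition smooth_partner (D : vdiagram) (s : bool) (h : vd_X D * 'I_4)
  : vd_X D * 'I_4 :=
  if hugged D s h.1 h.2 then (h.1, ordS h.2) else (h.1, ord_pred h.2).

(* the closed curves of a state: components of the graph on half-edges whose
   edges are the arcs and the smoothing connections *)
Definition state_rel (D : vdiagram) (st : {ffun vd_X D -> bool})
  : rel (vd_X D * 'I_4) :=
  fun x y => (vd_arc D x == y) || (smooth_partner D (st x.1) x == y).

Definition state_curves (D : vdiagram) (st : {ffun vd_X D -> bool}) : nat :=
  #|[pred x | fingraph.root (state_rel D st) x == x]| + vd_loops D.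

(* Bracket polynomial, evaluated at A B d in a commutative ring
   (the polynomial identity in Z[A,B,d] is equivalent to this identity for
   all commutative rings and all values). *)
Definition bracket {R : comPzRingType} (D : vdiagram) (A B d : R) : R :=
  \sum_(st : {ffun vd_X D -> bool})
     A ^+ #|[set c | st c]| * B ^+ #|[set c | ~~ st c]|
       * d ^+ (state_curves D st).-1.

(* Checkerboard colouring: col h = true iff the coloured side of the arc at
   half-edge h is the left side when leaving the crossing along h.  Left of
   half-edge i is corner i, right of half-edge i is corner i-1.  The two ends
   of an arc colour opposite sides (left at one end = right at the other),
   and colours alternate around each real crossing (coloured corners
   alternate). *)
Definition checkerboard (D : vdiagram) (col : vd_X D * 'I_4 -> bool) : Prop :=
  (forall h, col (vd_arc D h) = ~~ col h) /\
  (forall c (i : 'I_4), col (c, ordS i) = ~~ col (c, i)).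

(* Signed cyclic graphs (= orientable signed ribbon graphs), encoded as      *)
(* combinatorial maps: edges E, half-edges E * bool (the two ends of e are   *)
(* (e,false),(e,true)), rotation cg_rot = next half-edge counterclockwise at  *)
(* the same vertex; vertices carrying half-edges are the cg_rot-orbits, and   *)
(* cg_iso further isolated vertices.                                         *)
Record cgraph := CGraph {
  cg_E : finType;
  cg_rot : cg_E * bool -> cg_E * bool;
  cg_iso : nat;
  cg_sign : cg_E -> bool        (* true = positive edge *)
}.
Arguments cg_rot : clear implicits.
Arguments cg_sign : clear implicits.

Section CGraphDefs.
Variable G : cgraph.
Local Notation dart := (cg_E G * bool)%type.

Definition flipd (x : dart) : dart := (x.1, ~~ x.2).

(* induced cyclic order on the half-edges of the edges in S *)
Definition rot_in (S : {set cg_E G}) (x : dart) : dart :=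
  let s := traject (cg_rot G) (cg_rot G x) #|{: dart}| in
  nth x s (find (fun y : dart => y.1 \in S) s).

(* boundary-walk permutation of the spanning subgraph with edge set S *)
Definition face_perm (S : {set cg_E G}) (x : dart) : dart :=
  if x.1 \in S then rot_in S (flipd x) else x.

(* number of boundary components of the ribbon graph of the spanning
   subgraph (all vertices, edges S): faces, plus one per vertex with no
   edge of S *)
Definition bc (S : {set cg_E G}) : nat :=
  #|[pred x : dart | (x.1 \in S) && (froot (face_perm S) x == x)]|
  + #|[pred x : dart | (froot (cg_rot G) x == x) &&
                       [forall y : dart, fconnect (cg_rot G) x y ==> (y.1 \notin S)]]|
  + cg_iso G.

(* F[G] via the deletion / marking recursion: the state is the set E' of
   present edges and the set M of marked ones; the unmarked edge used is the
   first one.  n is fuel (#|E| suffices). *)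
Fixpoint Frec {R : comPzRingType} (A B d : R) (n : nat)
    (E' M : {set cg_E G}) : R :=
  match n with
  | 0 => d ^+ (bc E').-1
  | n'.+1 =>
    match [pick e in E' :\: M] with
    | None => d ^+ (bc E').-1
    | Some e =>
        if cg_sign G e then
          B * Frec A B d n' (E' :\ e) M + A * Frec A B d n' E' (e |: M)
        else
          A * Frec A B d n' (E' :\ e) M + B * Frec A B d n' E' (e |: M)
    end
  end.

Definition Fpoly {R : comPzRingType} (A B d : R) : R :=
  Frec A B d #|{: cg_E G}| setT set0.

End CGraphDefs.

(* Edges = real crossings; the two half-edges of crossing c sit at its two   *)
(* coloured corners tait_corner c false / true.  The rotation follows the    *)
(* exterior circle of the coloured annulus (coloured side on the left):      *)
(* from coloured corner i of c, leave along half-edge i (coloured on the     *)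
(* left), reach half-edge j of c' = arc (c,i), and arrive at corner j-1.     *)
(* Crossingless components give isolated vertices.                           *)
Section Tait.
Variables (D : vdiagram) (col : vd_X D * 'I_4 -> bool).

Definition tait_corner (c : vd_X D) (b : bool) : 'I_4 :=
  inord ((~~ col (c, ord0)) + 2 * b)%N.

Definition tait_rot (x : vd_X D * bool) : vd_X D * bool :=
  let h := vd_arc D (x.1, tait_corner x.1 x.2) in
  (h.1, (2 <= ord_pred h.2)%N).

(* positive iff the A-smoothing joins the two coloured corners *)
Definition tait_sign (c : vd_X D) : bool := corner_is_A D c (tait_corner c false).

Definition tait_graph : cgraph :=
  @CGraph (vd_X D) tait_rot (vd_loops D) tait_sign.

End Tait.

From mathcomp Require Import all_boot all_order all_algebra.
Set Implicit Arguments. Unset Strict Implicit. Unset Printing Implicit Defensive.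
Import GRing.Theory.

(* Expanding F[G] along every edge turns it into a sum over spanning
   subgraphs S, an edge of S weighted A if positive and B if negative, and
   the other way round for the deleted edges.  A state of D corresponds to
   the subgraph of crossings whose smoothing joins the two coloured corners,
   with the same weight, so it remains to see that the state has bc(S)
   curves.  Traced along its coloured side, each curve is a cycle of the
   boundary walk "rotate at the vertex, and cross every edge of S".  A cycle
   of this walk either crosses an edge of S, and then its first-return map to
   the darts of S is conjugate, by exchanging the two ends of an edge, to the
   face permutation of S; or it turns once around a vertex carrying no edge
   of S. *)

Lemma n_comp_transfer (T T' : finType) (h : T' -> T) (e : rel T) (e' : rel T')
    (a : {pred T}) (a' : {pred T'}) :
    connect_sym e -> connect_sym e' -> closed e a -> closed e' a' ->
    {in a', forall x', h x' \in a} ->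
    (forall x, x \in a -> exists2 x', x' \in a' & connect e x (h x')) ->
    {in a' &, forall x' y', connect e' x' y' = connect e (h x') (h y')} ->
  n_comp e a = n_comp e' a'.
Proof.
move=> sym_e sym_e' cl_a cl_a' ha onto_a h_connect.
have inj_h : {in predI (fingraph.roots e') a' &, injective (fingraph.root e \o h)}.
  move=> x' y' /andP[/eqP rx' ax'] /andP[/eqP ry' ay'] /= /(fingraph.rootP sym_e).
  by rewrite -h_connect // => /(fingraph.rootP sym_e'); rewrite rx' ry'.
rewrite /n_comp_mem -(card_in_image inj_h); apply: eq_card => x.
apply/andP/imageP => [[/eqP rx ax] | [x' /andP[/eqP rx' ax'] ->]]; last first.
  split; first exact: fingraph.roots_root.
  by rewrite /= -(closed_connect cl_a (fingraph.connect_root _ _)) ha.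
have [y' ay' xy] := onto_a x ax.
have ary' : fingraph.root e' y' \in a'.
  by rewrite -(closed_connect cl_a' (fingraph.connect_root _ _)).
exists (fingraph.root e' y'); first by rewrite inE /= fingraph.roots_root.
have yr : connect e (h y') (h (fingraph.root e' y')).
  by rewrite -h_connect // fingraph.connect_root.
by rewrite /= -(fingraph.rootP sym_e yr) -(fingraph.rootP sym_e xy) rx.
Qed.

Section BoundaryWalk.
Variables (G : cgraph) (S : {set cg_E G}).
Hypothesis rot_inj : injective (cg_rot G).
Local Notation dart := (cg_E G * bool)%type.
Local Notation rot := (cg_rot G).
Local Notation flip := (flipd G).

Definition bwalk (x : dart) : dart :=
  if (rot x).1 \in S then flip (rot x) else rot x.

Lemma flipdK : involutive flip.
Proof. by case=> e b; rewrite /flipd negbK. Qed.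

Lemma iter_rot_inj n : injective (iter n rot).
Proof. by elim: n => //= n IHn x y /rot_inj /IHn. Qed.

Lemma rot_inP x : x.1 \in S ->
  exists k, [/\ 0 < k, rot_in G S x = iter k rot x, (iter k rot x).1 \in S
              & forall j, 0 < j < k -> (iter j rot x).1 \notin S].
Proof.
move=> Sx; set s := traject rot (rot x) #|{: dart}|.
have has_s : has (fun y : dart => y.1 \in S) s.
  apply/hasP; exists (iter (order rot x) rot x); last by rewrite iter_order.
  apply/trajectP; exists (order rot x).-1; last by rewrite -iterSr prednK ?order_gt0.
  by rewrite prednK ?order_gt0 // max_card.
have lt_find : find (fun y : dart => y.1 \in S) s < #|{: dart}|.
  by rewrite -(size_traject rot (rot x) #|{: dart}|) -has_find.
have nth_s j : j < #|{: dart}| -> nth x s j = iter j.+1 rot x.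
  by move=> lt_j; rewrite (set_nth_default (rot x)) ?size_traject // nth_traject // iterSr.
exists (find (fun y : dart => y.1 \in S) s).+1; split => //.
- by rewrite /rot_in -/s nth_s.
- by rewrite -nth_s //; apply: (nth_find x has_s).
- case=> // j /andP[_]; rewrite ltnS => lt_j.
  by rewrite -nth_s ?(ltn_trans lt_j) // (before_find _ lt_j).
Qed.

Lemma rot_in_in x : x.1 \in S -> (rot_in G S x).1 \in S.
Proof. by case/rot_inP => k [_ -> ]. Qed.

Lemma rot_in_inj u v : u.1 \in S -> v.1 \in S -> rot_in G S u = rot_in G S v -> u = v.
Proof.
have first_return k m (u' v' : dart) : k <= m -> 0 < k -> u'.1 \in S ->
    (forall j, 0 < j < m -> (iter j rot v').1 \notin S) ->
    iter k rot u' = iter m rot v' -> u' = v'.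
  move=> le_km k_gt0 Su' v'_first.
  rewrite -(subnKC le_km) iterD => /iter_rot_inj eq_u'; move: Su'; rewrite eq_u'.
  case: (posnP (m - k)) => [-> // | mk_gt0] Sm.
  have := v'_first (m - k); rewrite mk_gt0 ltn_subrL k_gt0 (leq_trans k_gt0 le_km).
  by rewrite Sm => /(_ isT).
move=> Su Sv; case/rot_inP: (Su) => k [k_gt0 -> _ u_first].
case/rot_inP: (Sv) => m [m_gt0 -> _ v_first].
case: (leqP k m) => [le_km | /ltnW le_mk] eq_km; first exact: first_return eq_km.
by apply/esym/(first_return _ _ _ _ le_mk) => //; rewrite eq_km.
Qed.

Lemma face_perm_inj : injective (face_perm G S).
Proof.
move=> x y; rewrite /face_perm; case Sx: (x.1 \in S); case Sy: (y.1 \in S).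
- by move/rot_in_inj => /(_ Sx Sy)/(can_inj flipdK).
- by move=> eq_xy; move: (@rot_in_in (flip x) Sx); rewrite eq_xy Sy.
- by move=> eq_xy; move: (@rot_in_in (flip y) Sy); rewrite -eq_xy Sx.
- by [].
Qed.

Lemma bwalk_inj : injective bwalk.
Proof.
move=> x y; rewrite /bwalk; case Sx: ((rot x).1 \in S); case Sy: ((rot y).1 \in S).
- by move/(can_inj flipdK)/rot_inj.
- by move=> eq_xy; move: Sy; rewrite -eq_xy /= Sx.
- by move=> eq_xy; move: Sx; rewrite eq_xy /= Sy.
- by move/rot_inj.
Qed.

Lemma face_perm_in x : ((face_perm G S x).1 \in S) = (x.1 \in S).
Proof. by rewrite /face_perm; case: ifP => // Sx; rewrite (@rot_in_in (flip x)). Qed.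

Lemma iter_bwalk_flipd x : x.1 \in S ->
  exists k, [/\ 0 < k, iter k bwalk (flip x) = flip (face_perm G S x)
              & forall j, 0 < j < k -> (iter j bwalk (flip x)).1 \notin S].
Proof.
move=> Sx; have [k [k_gt0 eq_k Sk k_first]] := @rot_inP (flip x) Sx.
have iterE j : j < k -> iter j bwalk (flip x) = iter j rot (flip x).
  elim: j => // j IHj lt_jk; rewrite iterS IHj ?(ltn_trans _ lt_jk) // /bwalk -iterS.
  by rewrite (negbTE (k_first _ _)) // lt_jk.
exists k; split => //; last by move=> j /andP[j_gt0 lt_jk]; rewrite iterE ?k_first ?j_gt0.
case: k k_gt0 eq_k Sk k_first iterE => // k _ eq_k Sk _ iterE.
by rewrite iterS iterE // /bwalk -iterS Sk /face_perm Sx eq_k.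
Qed.

Lemma fconnect_face_perm x y : x.1 \in S -> y.1 \in S ->
  fconnect (face_perm G S) x y = fconnect bwalk (flip x) (flip y).
Proof.
move=> Sx Sy; apply/idP/idP => /iter_findex; move: (findex _ _ _) => m.
- move=> <-{y Sy}; elim: m x Sx => [|m IHm] x Sx; first exact: connect0.
  have [k [_ eq_k _]] := iter_bwalk_flipd Sx.
  rewrite iterSr; apply: connect_trans (IHm _ _); last by rewrite face_perm_in.
  by rewrite -eq_k fconnect_iter.
elim/ltn_ind: m x Sx => m IHm x Sx eq_m.
have [k [k_gt0 eq_k k_first]] := iter_bwalk_flipd Sx.
case: (leqP k m) => [le_km | lt_mk].
  apply: connect_trans (fconnect1 _ x) (IHm (m - k) _ _ _ _).
  - by rewrite ltn_subrL k_gt0 (leq_trans k_gt0 le_km).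
  - by rewrite face_perm_in.
  by rewrite -eq_k -iterD subnK.
case: m IHm eq_m lt_mk => [|m] _ eq_m lt_mk.
  by apply: eq_connect0; apply: (can_inj flipdK).
by have := k_first m.+1; rewrite lt_mk eq_m /= Sy => /(_ isT).
Qed.

Definition bwalk_meets :=
  [pred x : dart | [exists u : dart, (u.1 \in S) && fconnect bwalk x u]].
Definition rot_avoids :=
  [pred x : dart | [forall y, fconnect rot x y ==> (y.1 \notin S)]].

Lemma bwalk_sym : connect_sym (coerced_frel bwalk).
Proof. exact: fconnect_sym bwalk_inj. Qed.

Lemma bwalk_meets_closed : fclosed bwalk bwalk_meets.
Proof.
apply: (intro_closed bwalk_sym) => x y /eqP <- /existsP[u /andP[Su xu]].
by apply/existsP; exists u; rewrite Su -(same_fconnect1 bwalk_inj).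
Qed.

Lemma bwalk_faces :
  fcard bwalk bwalk_meets = fcard (face_perm G S) [pred x | x.1 \in S].
Proof.
apply: (@n_comp_transfer _ _ flip).
- exact: bwalk_sym.
- exact: fconnect_sym face_perm_inj.
- exact: bwalk_meets_closed.
- apply: (intro_closed (fconnect_sym face_perm_inj)) => x y /eqP <-.
  by rewrite !inE face_perm_in.
- by move=> x Sx; apply/existsP; exists (flip x); rewrite connect0 andbT.
- move=> x /existsP[u /andP[Su xu]]; exists (flip u); last by rewrite flipdK.
  by rewrite inE.
- by move=> x y; rewrite !inE; exact: fconnect_face_perm.
Qed.

Lemma iter_bwalk_avoids x n : x \in rot_avoids -> iter n bwalk x = iter n rot x.
Proof.
move=> /forallP x_avoids; elim: n => // n IHn; rewrite !iterS IHn /bwalk.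
by have := x_avoids (iter n.+1 rot x); rewrite fconnect_iter /= => /negbTE ->.
Qed.

Lemma bwalk_meetsN x : (x \notin bwalk_meets) = (x \in rot_avoids).
Proof.
apply/idP/idP => [x_off | x_avoids].
  have iterE n : iter n bwalk x = iter n rot x.
    elim: n => // n IHn; rewrite !iterS IHn /bwalk; case: ifPn => // S_next.
    case/negP: x_off; apply/existsP; exists (iter n.+1 bwalk x).
    by rewrite fconnect_iter andbT iterS IHn /bwalk S_next.
  apply/forallP => y; apply/implyP => /iter_findex <-; rewrite -iterE.
  apply: contra x_off => Sy; apply/existsP; exists (iter (findex rot x y) bwalk x).
  by rewrite Sy fconnect_iter.
apply/existsP => -[u /andP[Su /iter_findex]]; rewrite iter_bwalk_avoids // => eq_u.
by move/forallP: x_avoids => /(_ u); rewrite -eq_u fconnect_iter eq_u Su.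
Qed.

Lemma bwalk_bare_vertices :
  fcard bwalk [predC bwalk_meets] = fcard rot rot_avoids.
Proof.
symmetry; apply: (@n_comp_transfer _ _ id).
- exact: fconnect_sym rot_inj.
- exact: bwalk_sym.
- apply: (intro_closed (fconnect_sym rot_inj)) => x y /eqP <- /forallP x_avoids.
  apply/forallP => z; apply/implyP => yz; apply: (implyP (x_avoids z)).
  exact: connect_trans (fconnect1 rot x) yz.
- exact: predC_closed bwalk_meets_closed.
- by move=> x; rewrite inE bwalk_meetsN.
- by move=> x x_avoids; exists x; rewrite ?inE ?bwalk_meetsN ?connect0.
move=> x y; rewrite inE bwalk_meetsN => x_avoids _.
apply/idP/idP => /iter_findex <-.
  by rewrite iter_bwalk_avoids // fconnect_iter.
by rewrite -iter_bwalk_avoids // fconnect_iter.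
Qed.

Lemma bc_bwalk : bc G S = fcard bwalk predT + cg_iso G.
Proof.
rewrite /bc (n_compC bwalk_meets) bwalk_faces bwalk_bare_vertices; congr (_ + _ + _).
by apply: eq_card => x; rewrite !inE andbC.
Qed.

End BoundaryWalk.

Section FStateSum.
Local Open Scope ring_scope.
Variables (R : comPzRingType) (G : cgraph) (A B d : R).
Local Notation E := (cg_E G).

Definition edge_weight (e : E) (kept : bool) : R :=
  if kept == cg_sign G e then A else B.

Definition partial_state_sum (E' M : {set E}) : R :=
  \sum_(S : {set E} | (M \subset S) && (S \subset E'))
     (\prod_(e in E' :\: M) edge_weight e (e \in S)) * d ^+ (bc G S).-1.

Lemma partial_state_sum_marked (M : {set E}) :
  partial_state_sum M M = d ^+ (bc G M).-1.
Proof.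
rewrite /partial_state_sum (big_pred1 M) => [|S]; first by rewrite setDv big_set0 mul1r.
by rewrite /= eqEsubset andbC.
Qed.

Lemma partial_state_sum_split (E' M : {set E}) e : e \in E' :\: M ->
  partial_state_sum E' M = edge_weight e false * partial_state_sum (E' :\ e) M
                           + edge_weight e true * partial_state_sum E' (e |: M).
Proof.
rewrite inE => /andP[eNM eE'].
have rest_del : (E' :\ e) :\: M = (E' :\: M) :\ e.
  by apply/setP => x; rewrite !inE andbCA.
have rest_mark : E' :\: (e |: M) = (E' :\: M) :\ e.
  by apply/setP => x; rewrite !inE negb_or -andbA.
have prod_split (S : {set E}) : \prod_(x in E' :\: M) edge_weight x (x \in S)
    = edge_weight e (e \in S) * \prod_(x in (E' :\: M) :\ e) edge_weight x (x \in S).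
  by rewrite (bigD1 e) ?inE ?eNM //; congr (_ * _); apply: eq_bigl => x; rewrite !inE andbC.
rewrite /partial_state_sum rest_del rest_mark !mulr_sumr addrC.
rewrite (bigID (fun S : {set E} => e \in S)) /=.
congr (_ + _); apply: eq_big => S.
- by rewrite subUset sub1set; case: (e \in S) (M \subset S) (S \subset E') => [] [] [].
- by move=> /andP[_ eS]; rewrite prod_split eS mulrA.
- by rewrite subsetD1; case: (e \in S) (M \subset S) (S \subset E') => [] [] [].
- by move=> /andP[_ eNS]; rewrite prod_split (negbTE eNS) mulrA.
Qed.

Lemma Frec_partial_state_sum n (E' M : {set E}) :
  M \subset E' -> (#|E' :\: M| <= n)%N -> Frec G A B d n E' M = partial_state_sum E' M.
Proof.
elim: n E' M => [|n IHn] E' M sub_ME' le_n.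
  move: le_n; rewrite leqn0 cards_eq0 setD_eq0 => sub_E'M.
  by rewrite /= (eqP _ : E' = M) ?partial_state_sum_marked // eqEsubset sub_E'M.
rewrite /=; case: pickP => [e eD | none]; last first.
  have sub_E'M : E' \subset M by rewrite -setD_eq0; apply/eqP/setP => x; rewrite none inE.
  by rewrite (eqP _ : E' = M) ?partial_state_sum_marked // eqEsubset sub_E'M.
move: (eD); rewrite inE => /andP[eNM eE'].
have le_rest : (#|(E' :\: M) :\ e| <= n)%N by move: le_n; rewrite (cardsD1 e) eD.
rewrite (partial_state_sum_split eD) IHn; last 2 first.
- by rewrite subsetD1 sub_ME'.
- apply: leq_trans le_rest; apply: subset_leq_card.
  by apply/subsetP => x; rewrite !inE andbCA.
rewrite IHn; last 2 first.
- by rewrite subUset sub1set eE' sub_ME'.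
- apply: leq_trans le_rest; apply: subset_leq_card.
  by apply/subsetP => x; rewrite !inE negb_or andbA.
by rewrite /edge_weight; case: (cg_sign G e).
Qed.

Lemma Fpoly_state_sum : Fpoly G A B d =
  \sum_(S : {set E}) (\prod_e edge_weight e (e \in S)) * d ^+ (bc G S).-1.
Proof.
rewrite /Fpoly Frec_partial_state_sum ?sub0set ?setD0 ?cardsT // /partial_state_sum.
apply: eq_big => [S | S _]; first by rewrite sub0set subsetT.
by rewrite setD0; congr (_ * _); apply: eq_bigl => e; rewrite inE.
Qed.

End FStateSum.

Section TaitDiagram.
Variables (D : vdiagram) (col : vd_X D * 'I_4 -> bool).
Hypotheses (wf : vdiagram_wf D) (cb : checkerboard D col).
Local Notation half := (vd_X D * 'I_4)%type.
Local Notation dart := (vd_X D * bool)%type.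
Local Notation arc := (vd_arc D).
Local Notation G := (tait_graph D col).

Lemma arcK : involutive arc. Proof. exact: wf.1. Qed.

Lemma col_arc h : col (arc h) = ~~ col h. Proof. exact: cb.1. Qed.

Lemma col_pred c j : col (c, ord_pred j) = ~~ col (c, j).
Proof. by rewrite -[in RHS](ord_predK j) cb.2 negbK. Qed.

Lemma colE c i : col (c, i) = col (c, ord0) (+) odd i.
Proof.
have colS := cb.2 c.
case: i => [[|[|[|[|i]]]] lt_i4] //=.
- by rewrite addbF; congr col; congr pair; apply: val_inj.
- by rewrite -[Ordinal _](@val_inj _ _ _ (ordS ord0)) // colS addbT.
- by rewrite -[Ordinal _](@val_inj _ _ _ (ordS (ordS ord0))) // !colS negbK addbF.
- by rewrite -[Ordinal _](@val_inj _ _ _ (ordS (ordS (ordS ord0)))) // !colS negbK addbT.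
Qed.

(* [corner x] is the half-edge having the coloured corner of the dart [x] on
   its left; [corner_dart] inverts it on coloured half-edges. *)
Definition corner (x : dart) : half := (x.1, tait_corner D col x.1 x.2).
Definition corner_dart (h : half) : dart := (h.1, (2 <= h.2)%N).

Lemma col_corner x : col (corner x) = true.
Proof.
case: x => c b; rewrite /corner /tait_corner colE /=.
by case: (col (c, ord0)); case: b; rewrite inordK.
Qed.

Lemma corner_dartK : cancel corner corner_dart.
Proof.
case=> c b; rewrite /corner /corner_dart /tait_corner /=.
by case: (col (c, ord0)); case: b; rewrite inordK.
Qed.

Lemma cornerK h : col h -> corner (corner_dart h) = h.
Proof.
case: h => c j; rewrite colE /corner /corner_dart /tait_corner /=.
case: (col (c, ord0)); case: j => [[|[|[|[|j]]]] lt_j4] //= _;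
  by congr pair; apply: val_inj; rewrite /= inordK.
Qed.

Lemma corner_flipd x : corner (flipd G x) = (x.1, ordS (ordS (corner x).2)).
Proof.
case: x => c b; rewrite /corner /flipd /tait_corner /=; congr pair; apply: val_inj.
by case: (col (c, ord0)); case: b; rewrite /= !inordK.
Qed.

Lemma corner_tait_rot x :
  corner (tait_rot D col x) = ((arc (corner x)).1, ord_pred (arc (corner x)).2).
Proof.
have -> : tait_rot D col x =
  corner_dart ((arc (corner x)).1, ord_pred (arc (corner x)).2) by [].
by rewrite cornerK // col_pred -surjective_pairing col_arc col_corner.
Qed.

Lemma tait_rot_inj : injective (tait_rot D col).
Proof.
move=> x y /(congr1 corner); rewrite !corner_tait_rot.
move=> /(congr1 (fun h : half => (h.1, ordS h.2))) /=.
rewrite !ord_predK -!surjective_pairing.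
by move/(can_inj arcK)/(can_inj corner_dartK).
Qed.

Variable st : {ffun vd_X D -> bool}.

(* The spanning subgraph of the Tait graph matching the state [st]: the
   crossings whose smoothing joins the two coloured corners. *)
Definition kept := [set c | st c == tait_sign D col c].

Lemma prod_edge_weight_kept (R : comPzRingType) (A B : R) :
  (\prod_c edge_weight (G := G) A B c (c \in kept))%R
  = (A ^+ #|[set c | st c]| * B ^+ #|[set c | ~~ st c]|)%R.
Proof.
rewrite (bigID st) /= -!prodr_const; congr (_ * _)%R.
  apply: eq_big => [c | c st_c]; rewrite ?inE //.
  by rewrite /edge_weight st_c [cg_sign _ _]/=; case: tait_sign.
apply: eq_big => [c | c /negbTE st_c]; rewrite ?inE //.
by rewrite /edge_weight st_c [cg_sign _ _]/=; case: tait_sign.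
Qed.

Lemma tait_bwalk_inj : injective (@bwalk G kept).
Proof. exact: (@bwalk_inj G kept tait_rot_inj). Qed.

Definition smooth (h : half) : half := smooth_partner D (st h.1) h.

Lemma smoothE h :
  smooth h = (h.1, if hugged D (st h.1) h.1 h.2 then ordS h.2 else ord_pred h.2).
Proof. by rewrite /smooth /smooth_partner; case: ifP. Qed.

Lemma smooth_uncoloured h : col h = false ->
  smooth h = (h.1, if h.1 \in kept then ordS h.2 else ord_pred h.2).
Proof.
case: h => c j; rewrite smoothE colE inE /hugged /tait_sign /corner_is_A /tait_corner /=.
case: (col (c, ord0)); case: j => [[|[|[|[|j]]]] lt_j4] //= _;
  by rewrite inordK //; case: (st c); case: (vd_over D c).
Qed.

Lemma corner_bwalk x : corner (@bwalk G kept x) = smooth (arc (corner x)).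
Proof.
rewrite smooth_uncoloured ?col_arc ?col_corner // /bwalk /=.
by case: ifP => _; rewrite ?corner_flipd corner_tait_rot // ord_predK.
Qed.

Lemma smoothK : involutive smooth.
Proof.
case=> c j; rewrite !smoothE /hugged /corner_is_A /=; congr pair.
by case: (st c); case: (vd_over D c); case: j => [[|[|[|[|j]]]] lt_j4] //=; apply: val_inj.
Qed.

Lemma col_smooth h : col (smooth h) = ~~ col h.
Proof.
case: h => c j; rewrite smoothE /=; case: ifP => _; last exact: col_pred.
by rewrite -[in RHS](ordSK j) col_pred negbK.
Qed.

Lemma bwalk_corner_dart h : col h ->
  @bwalk G kept (corner_dart h) = corner_dart (smooth (arc h)).
Proof. by move=> col_h; rewrite -[LHS]corner_dartK corner_bwalk cornerK. Qed.

(* [h] and [arc h] lie on the same curve of the state and exactly one of them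
   is coloured. *)
Definition corner_rep (h : half) : dart := corner_dart (if col h then h else arc h).

Lemma corner_repK x : corner_rep (corner x) = x.
Proof. by rewrite /corner_rep col_corner corner_dartK. Qed.

Lemma state_rel_sym : symmetric (state_rel D st).
Proof.
move=> h k; rewrite /state_rel -/(smooth h) -/(smooth k).
by rewrite (can2_eq arcK arcK) (can2_eq smoothK smoothK) !(eq_sym h).
Qed.

Lemma state_rel_corner_rep h k : state_rel D st h k ->
  fconnect (@bwalk G kept) (corner_rep h) (corner_rep k).
Proof.
rewrite /corner_rep => /orP[] /eqP <-.
  by rewrite col_arc arcK; case: (col h); rewrite connect0.
rewrite -/(smooth h) col_smooth; case col_h: (col h) => /=.
  rewrite (fconnect_sym tait_bwalk_inj); apply: connect1.
  by rewrite /= bwalk_corner_dart ?col_arc ?col_smooth ?col_h // arcK smoothK.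
by apply: connect1; rewrite /= bwalk_corner_dart ?col_arc ?col_h // arcK.
Qed.

Lemma n_comp_state_rel :
  n_comp (state_rel D st) predT = fcard (@bwalk G kept) predT.
Proof.
apply: (@n_comp_transfer _ _ corner) => //.
- exact: sym_connect_sym state_rel_sym.
- exact: fconnect_sym tait_bwalk_inj.
- move=> h; exists (corner_rep h) => //; rewrite /corner_rep.
  case col_h: (col h); first by rewrite cornerK ?connect0.
  by rewrite cornerK ?col_arc ?col_h // connect1 // /state_rel eqxx.
move=> x y _ _; apply/idP/idP.
  move=> /iter_findex <-; elim: (findex _ _ _) => [|n IHn]; first exact: connect0.
  apply: connect_trans IHn _; rewrite iterS corner_bwalk.
  have arc_edge h : state_rel D st h (arc h) by rewrite /state_rel eqxx.
  have smooth_edge h : state_rel D st h (smooth h).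
    by rewrite /state_rel -/(smooth h) eqxx orbT.
  exact: connect_trans (connect1 (arc_edge _)) (connect1 (smooth_edge _)).
move=> /connectP[p path_p last_p].
rewrite -(corner_repK x) -(corner_repK y) last_p.
elim: p (corner x) path_p {last_p} => [|k p IHp] h /=; first by rewrite connect0.
by case/andP=> hk kp; apply: connect_trans (state_rel_corner_rep hk) (IHp k kp).
Qed.

Lemma state_curves_bc : state_curves D st = bc G kept.
Proof.
rewrite /state_curves bc_bwalk; last exact: tait_rot_inj.
congr (_ + _); rewrite -n_comp_state_rel.
by apply: eq_card => h; rewrite !inE andbT.
Qed.

End TaitDiagram.

Unset Implicit Arguments.
Theorem proposition4p4 (R : comPzRingType) (D : vdiagram)
    (col : vd_X D * 'I_4 -> bool) (A B d : R) :
  vdiagram_wf D -> checkerboard D col ->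
  bracket D A B d = Fpoly (tait_graph D col) A B d.
Proof.
move=> wf cb; rewrite Fpoly_state_sum /bracket (reindex (kept col)) /=.
  by apply: eq_bigr => st _; rewrite prod_edge_weight_kept (state_curves_bc wf cb).
exists (fun S : {set vd_X D} => [ffun c => (c \in S) == tait_sign D col c]) => [st _ | S _].
  by apply/ffunP => c; rewrite ffunE inE; case: (st c); case: tait_sign.
by apply/setP => c; rewrite !inE ffunE; case: (c \in S); case: tait_sign.
Qed.
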